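(* Let $f$ be a strategy-proof and non-bossy allocation mechanism over a basic categorized domain with $p\geq 2$. For any profile $P=(R_1,\ldots,R_n)$, any agent $j$, any bundle $\vec d$, and any linear order $R_j'$ that is a pushup of $\vec d$ from $R_j$, either $f(R_j',R_{-j})=f(P)$ or $f^j(R_j',R_{-j})=\vec d$.
   Context: Basic categorized domain: $n$ agents $\{1,\ldots,n\}$, $p$ categories $D_i=\{1,\ldots,n\}$ of indivisible items, bundles $\mathfrak D=D_1\times\cdots\times D_p$, $[\vec d]_i$ the $i$-th component. Each agent $j$ has a linear order $R_j$ over $\mathfrak D$; a profile is $P=(R_1,\ldots,R_n)$ and $(R_j',R_{-j})$ replaces $R_j$ by $R_j'$. An allocation is a map $A:\{1,\ldots,n\}\to\mathfrak D$ with $\{[A(1)]_i,\ldots,[A(n)]_i\}=D_i$ for each $i$. An allocation mechanism $f$ maps profiles to allocations; $f^j(P)$ is agent $j$'s bundle. Strategy-proofness: for all $P,j,R_j'$, $f^j(P)$ is ranked weakly above $f^j(R_j',R_{-j})$ in $R_j$. Non-bossiness: for all $P,j,R_j'$, if $f^j(P)=f^j(R_j',R_{-j})$ then $f(P)=f(R_j',R_{-j})$. A linear order $R'$ is a pushup of $\vec d$ from $R$ if $R'$ is obtained from $R$ by raising the position of $\vec d$ while keeping the relative order of all other bundles unchanged. *)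

From mathcomp Require Import all_boot.
Set Implicit Arguments. Unset Strict Implicit. Unset Printing Implicit Defensive.

(* Basic categorized domain: n agents ('I_n), p categories, each D_i = 'I_n. *)
Definition bundle (n p : nat) := {ffun 'I_p -> 'I_n}.

(* A (weak-form) linear order R over bundles: R (a,b) = "a is ranked weakly
   above b".  Stored as a finite function so that orders are finite data. *)
Definition relB (n p : nat) := {ffun bundle n p * bundle n p -> bool}.

Definition pref n p (R : relB n p) (a b : bundle n p) : bool := R (a, b).

(* boolean so that lorder is a finType; components read as: totality,
   antisymmetry, transitivity. *)
Definition is_linear_order n p (R : relB n p) : bool :=
  [&& [forall a, forall b, pref R a b || pref R b a],
      [forall a, forall b, (pref R a b && pref R b a) ==> (a == b)] &
      [forall a, forall b, forall c, (pref R a b && pref R b c) ==> pref R a c]].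

Definition lorder (n p : nat) := {R : relB n p | is_linear_order R}.


Definition lpref n p (R : lorder n p) (a b : bundle n p) : bool := pref (proj1_sig R) a b.

Definition profile (n p : nat) := {ffun 'I_n -> lorder n p}.

Definition upd n p (P : profile n p) (j : 'I_n) (Rj' : lorder n p) : profile n p :=
  [ffun i => if i == j then Rj' else P i].

Definition alloc (n p : nat) := {ffun 'I_n -> bundle n p}.

Definition is_allocation n p (A : alloc n p) : Prop :=
  forall i : 'I_p, [set A j i | j : 'I_n] = [set: 'I_n].

Definition mechanism (n p : nat) := profile n p -> alloc n p.

Definition strategy_proof n p (f : mechanism n p) : Prop :=
  forall (P : profile n p) (j : 'I_n) (Rj' : lorder n p),
    lpref (P j) (f P j) (f (upd P j Rj') j).

Definition non_bossy n p (f : mechanism n p) : Prop :=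
  forall (P : profile n p) (j : 'I_n) (Rj' : lorder n p),
    f P j = f (upd P j Rj') j -> f P = f (upd P j Rj').

Definition pushup n p (R R' : lorder n p) (d : bundle n p) : Prop :=
  (forall a b, a != d -> b != d -> lpref R' a b = lpref R a b) /\
  (forall a, lpref R d a -> lpref R' d a).

From mathcomp Require Import all_boot.

(* Let A = f^j(P) and B = f^j(R_j', R_{-j}).  Strategy-proofness, applied once
   from P and once from (R_j', R_{-j}), gives A R_j B and B R_j' A.  If B <> d,
   the pushup either leaves the comparison of A and B unchanged (A <> d) or
   keeps d = A above B; in both cases antisymmetry forces A = B, and
   non-bossiness turns this into equality of the whole allocations. *)

Lemma upd_at n p (P : profile n p) j R : upd P j R j = R.
Proof. by rewrite ffunE eqxx. Qed.

Lemma upd_upd n p (P : profile n p) j R R' : upd (upd P j R) j R' = upd P j R'.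
Proof. by apply/ffunP=> i; rewrite !ffunE; case: eqP. Qed.

Lemma upd_id n p (P : profile n p) j : upd P j (P j) = P.
Proof. by apply/ffunP=> i; rewrite ffunE; case: eqP => // ->. Qed.

Lemma lpref_anti n p (R : lorder n p) a b : lpref R a b -> lpref R b a -> a = b.
Proof.
move=> Rab Rba; have /and3P [_ /forallP antisym _] := valP R.
apply/eqP; move: (antisym a) => /forallP /(_ b) /implyP; apply.
by rewrite -!/(lpref _ _ _) Rab Rba.
Qed.

Lemma pushup_reversal_eq n p (R R' : lorder n p) d a b :
  pushup R R' d -> b != d -> lpref R a b -> lpref R' b a -> a = b.
Proof.
move=> [same_off_d d_stays_above] bd Rab R'ba.
have [ad | ad] := eqVneq a d.
  by apply: lpref_anti _ R'ba; rewrite ad d_stays_above // -ad.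
by apply: lpref_anti Rab _; rewrite -same_off_d.
Qed.

Theorem lemma2 (n p : nat) (f : mechanism n p) :
  2 <= p ->
  (forall P, is_allocation (f P)) ->
  strategy_proof f -> non_bossy f ->
  forall (P : profile n p) (j : 'I_n) (d : bundle n p) (Rj' : lorder n p),
    pushup (P j) Rj' d ->
    f (upd P j Rj') = f P \/ f (upd P j Rj') j = d.
Proof.
move=> _ _ SP NB P j d Rj' push.
have truthful := SP P j Rj'.
have deviate := SP (upd P j Rj') j (P j).
rewrite upd_upd upd_id upd_at in deviate.
have [-> | Bd] := eqVneq (f (upd P j Rj') j) d; [by right | left].
by symmetry; apply: NB; exact: pushup_reversal_eq push Bd truthful deviate.
Qed.
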